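(* Let $G$ be a finite graph with $n$ vertices such that $\mathrm{Aut}(G)$ is cyclic of order $t$, generated by $\pi$, and let $t=\prod_{i=1}^s p_i^{r_i}$ be the prime factorization of $t$ (distinct primes $p_i$, $r_i\ge1$). Let $P^*=\{\pi^{t/p_1},\pi^{t/p_2},\dots,\pi^{t/p_s}\}$. Then for every positive integer $k$, $$L(G,k)=\sum_{P\subseteq P^*}(-1)^{|P|}N_{\ge}(P).$$
   Context: A $k$-labeling of $G$ is a map $\phi:V(G)\to\{1,\dots,k\}$; an automorphism $\pi$ preserves $\phi$ if $\phi(\pi(v))=\phi(v)$ for all $v$; $\phi$ is distinguishing if only the identity preserves it; $L(G,k)$ is the number of distinguishing $k$-labelings. For $P\subseteq\mathrm{Aut}(G)$, $N_{\ge}(P)$ denotes the number of $k$-labelings of $G$ preserved by every automorphism in $P$ (so $N_{\ge}(\emptyset)=k^n$). *)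

From mathcomp Require Import all_boot all_order all_algebra all_fingroup.
Set Implicit Arguments. Unset Strict Implicit. Unset Printing Implicit Defensive.

Definition simple_graph (V : finType) (e : rel V) : Prop :=
  symmetric e /\ irreflexive e.

Definition autG (V : finType) (e : rel V) : {set {perm V}} :=
  [set p : {perm V} | [forall x, forall y, e (p x) (p y) == e x y]].

(* k-labelings are finite functions V -> 'I_k (labels {0..k-1} ~ {1..k}). *)
Definition preserves (V : finType) (k : nat) (p : {perm V}) (phi : {ffun V -> 'I_k}) : bool :=
  [forall v, phi (p v) == phi v].

Definition distinguishing (V : finType) (e : rel V) (k : nat) (phi : {ffun V -> 'I_k}) : bool :=
  [forall p in autG e, preserves p phi ==> (p == 1%g)].

Definition L (V : finType) (e : rel V) (k : nat) : nat :=
  #|[set phi : {ffun V -> 'I_k} | distinguishing e phi]|.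

Definition Nge (V : finType) (k : nat) (P : {set {perm V}}) : nat :=
  #|[set phi : {ffun V -> 'I_k} | [forall p in P, preserves p phi]]|.

Definition Pstar (V : finType) (pi : {perm V}) (t : nat) : {set {perm V}} :=
  [set x in [seq (pi ^+ (t %/ p))%g | p <- primes t]].

From mathcomp Require Import all_boot all_order all_algebra all_fingroup.
From mathcomp Require Import cyclic.
Set Implicit Arguments. Unset Strict Implicit. Unset Printing Implicit Defensive.
Import GRing.Theory.

(* The automorphisms preserving a labeling form a subgroup of Aut(G) = <[pi]>,
   and a nontrivial subgroup of a cyclic group contains a subgroup of prime
   order q, which is the unique one, generated by pi ^+ (t %/ q).  So a labeling
   is distinguishing iff it is preserved by no element of P^*, and
   inclusion-exclusion over P^* counts these labelings. *)

Section CyclicPrimeSubgroups.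

Variable gT : finGroupType.
Implicit Types x y : gT.
Local Open Scope group_scope.

Lemma order_expg_div x d : d %| #[x] -> #[x ^+ (#[x] %/ d)] = d.
Proof. by move=> dx; rewrite orderXdiv ?dvdn_div // divnA // mulKn. Qed.

Lemma expg_div_prime_neq1 x q : prime q -> q %| #[x] -> x ^+ (#[x] %/ q) != 1.
Proof. by move=> q_pr qx; rewrite -order_eq1 order_expg_div // gtn_eqF ?prime_gt1. Qed.

Lemma cycle_expg_div_prime_sub x y :
  y \in <[x]> -> y != 1 -> exists2 q, q \in primes #[x] & x ^+ (#[x] %/ q) \in <[y]>.
Proof.
move=> y_x y_neq1.
have y_gt1 : 1 < #[y] by rewrite ltn_neqAle eq_sym order_eq1 y_neq1 order_gt0.
set q := pdiv #[y]; have q_pr : prime q := pdiv_prime y_gt1.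
have q_y : q %| #[y] := pdiv_dvd _.
have q_x : q %| #[x] := dvdn_trans q_y (order_dvdG y_x).
exists q; first by rewrite mem_primes q_pr order_gt0.
have /eqP sameG : <[x ^+ (#[x] %/ q)]> :==: <[y ^+ (#[y] %/ q)]>.
  rewrite (eq_subG_cyclic (cycle_cyclic x)) ?cycleX ?cycle_subG ?groupX //.
  by rewrite -!orderE !order_expg_div.
by apply: (subsetP (cycleX y (#[y] %/ q))); rewrite -sameG cycle_id.
Qed.

End CyclicPrimeSubgroups.

Lemma preserves_cycle (V : finType) k (p q : {perm V}) (phi : {ffun V -> 'I_k}) :
  preserves p phi -> q \in <[p]>%g -> preserves q phi.
Proof.
move=> /forallP p_phi /cycleP[n ->]; elim: n => [|n /forallP IH]; apply/forallP => v.
  by rewrite expg0 perm1.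
by rewrite expgS permM (eqP (IH _)) (eqP (p_phi _)).
Qed.

Lemma distinguishing_Pstar (V : finType) (e : rel V) (pi : {perm V}) k
    (phi : {ffun V -> 'I_k}) :
  autG e = <[pi]>%g ->
  distinguishing e phi = [forall p in Pstar pi #[pi]%g, ~~ preserves p phi].
Proof.
rewrite /distinguishing => ->; apply/forall_inP/forall_inP => [dist z | noPstar p p_pi].
  rewrite inE => /mapP[q]; rewrite mem_primes => /and3P[q_pr _ q_pi] ->.
  apply: contraNN _ (expg_div_prime_neq1 q_pr q_pi).
  exact: implyP (dist _ (mem_cycle _ _)).
apply/implyP => p_phi; apply/contraT => p_neq1.
have [q q_pi pi_q_p] := cycle_expg_div_prime_sub p_pi p_neq1.
have Pstar_q : (pi ^+ (#[pi] %/ q))%g \in Pstar pi #[pi]%g by rewrite inE; apply: map_f.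
by case/negP: (noPstar _ Pstar_q); apply: preserves_cycle pi_q_p.
Qed.

Local Open Scope ring_scope.

Lemma prodr_1subr (R : comPzRingType) (I : finType) (S : {set I}) (a : I -> R) :
  \prod_(i in S) (1 - a i) = \sum_(P in powerset S) (-1) ^+ #|P| * \prod_(i in P) a i.
Proof.
have -> : \prod_(i in S) (1 - a i) = \prod_i ((if i \in S then - a i else 0) + 1).
  by rewrite big_mkcond; apply: eq_bigr => i _; case: ifP; rewrite ?add0r // addrC.
rewrite bigA_distr [RHS]big_mkcond /=; apply: eq_bigr => P _.
rewrite powersetE; case: (boolP (P \subset S)) => [/subsetP PS | /subsetPn[i Pi notSi]].
  rewrite -prodrN [RHS]big_mkcond; apply: eq_bigr => i _.
  by case: (boolP (i \in P)) => // /PS ->.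
by rewrite (bigD1 i) //= Pi (negbTE notSi) mul0r.
Qed.

Lemma natr_forall_in (R : comPzSemiRingType) (I : finType) (P : {set I}) (b : pred I) :
  [forall i in P, b i]%:R = \prod_(i in P) (b i)%:R :> R.
Proof.
case: (boolP [forall i in P, b i]) => [/forall_inP allb | /forall_inPn[i Pi /negbTE bi]].
  by rewrite big1 // => i /allb ->.
by rewrite (bigD1 i) //= bi mul0r.
Qed.

Lemma natr_card_set (R : pzSemiRingType) (X : finType) (B : pred X) :
  #|[set x | B x]|%:R = \sum_x (B x)%:R :> R.
Proof.
by rewrite -sum1_card natr_sum big_mkcond; apply: eq_bigr => x _; rewrite inE; case: (B x).
Qed.

Lemma inclusion_exclusion (I X : finType) (S : {set I}) (A : I -> pred X) :
  #|[set x | [forall i in S, ~~ A i x]]|%:Z =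
  \sum_(P in powerset S) (-1) ^+ #|P| * #|[set x | [forall i in P, A i x]]|%:Z.
Proof.
under [RHS]eq_bigr do rewrite -natz natr_card_set mulr_sumr.
rewrite -natz natr_card_set exchange_big; apply: eq_bigr => x _.
rewrite natr_forall_in (eq_bigr (fun i => 1 - (A i x)%:R)) => [|i _]; last by case: (A i x).
by rewrite prodr_1subr; apply: eq_bigr => P _; rewrite natr_forall_in.
Qed.

Theorem theorem2 (V : finType) (e : rel V) (pi : {perm V}) (t : nat)
  (hG : simple_graph e)
  (hcyc : autG e = <[pi]>%g)
  (ht : #[pi]%g = t) :
  forall k : nat, (0 < k)%N ->
    (L e k)%:Z = \sum_(P in powerset (Pstar pi t)) (-1) ^+ #|P| * (Nge k P)%:Z.
Proof.
move=> k _; subst t.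
have -> : L e k =
    #|[set phi : {ffun V -> 'I_k} | [forall p in Pstar pi #[pi]%g, ~~ preserves p phi]]|.
  by apply: eq_card => phi; rewrite !inE (distinguishing_Pstar _ hcyc).
exact: inclusion_exclusion.
Qed.
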